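(* Let $d\in\mathbb{N}$ and let $\mathcal{P}$ be a partition of $\mathbb{R}^{d}$. Suppose there exists $D\in(0,\infty)$ that is a strict pairwise bound for every $X\in\mathcal{P}$, and there exists $\epsilon\in(0,\infty)$ such that $|\mathcal{N}_{\epsilon}(\vec{q})|\leq d+1$ for all $\vec{q}\in\mathbb{R}^{d}$. Then there exists $\vec{p}\in\mathbb{R}^{d}$ such that $|\mathcal{N}_{\epsilon}(\vec{p})|=d+1$. Furthermore, $\mathcal{P}$ contains a $(d+1)$-clique.
   Context: On $\mathbb{R}^d$ use $d_{max}(\vec{x},\vec{y})=\max_i|x_i-y_i|$; $D$ is a strict pairwise bound for $X$ if $d_{max}(\vec{x},\vec{y})<D$ for all $\vec{x},\vec{y}\in X$; $\overline{B}_{\epsilon}(\vec{p})=\{\vec{x}:d_{max}(\vec{x},\vec{p})\le\epsilon\}$; $\mathcal{N}_{\epsilon}(\vec{p})=\{X\in\mathcal{P}: X\cap\overline{B}_{\epsilon}(\vec{p})\neq\emptyset\}$. Members $X,Y$ are adjacent if $\overline{X}\cap\overline{Y}\ne\emptyset$; an $n$-clique is a set of $n$ distinct pairwise adjacent members. *)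

From Stdlib Require Import Reals.
From mathcomp Require Import all_boot.
Open Scope R_scope.

Definition pointR (d : nat) := 'I_d -> R.
Definition regionR (d : nat) := pointR d -> Prop.
Definition setfam (d : nat) := regionR d -> Prop.

Set Implicit Arguments. Unset Strict Implicit. Unset Printing Implicit Defensive.

Definition dmax (d : nat) (x y : pointR d) : R :=
  \big[Rmax/0]_(i < d) Rabs (x i - y i).

Definition is_partition (d : nat) (P : setfam d) : Prop :=
  (forall X, P X -> exists x, X x) /\
  (forall X Y, P X -> P Y -> X <> Y -> forall x, X x -> Y x -> False) /\
  (forall x, exists X, P X /\ X x).

Definition strict_pairwise_bound (d : nat) (D : R) (X : regionR d) : Prop :=
  forall x y, X x -> X y -> dmax x y < D.

Definition closed_ball (d : nat) (eps : R) (p : pointR d) : regionR d :=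
  fun x => dmax x p <= eps.

Definition nbhd (d : nat) (P : setfam d) (eps : R) (p : pointR d) : setfam d :=
  fun X => P X /\ exists x, X x /\ closed_ball eps p x.

(* closureR in R^d (w.r.t. the d_max metric, which induces the usual topology) *)
Definition closureR (d : nat) (X : regionR d) : regionR d :=
  fun x => forall e, 0 < e -> exists y, X y /\ dmax x y < e.

Definition adjacent (d : nat) (X Y : regionR d) : Prop :=
  exists x, closureR X x /\ closureR Y x.

Definition card_le (d : nat) (F : setfam d) (n : nat) : Prop :=
  forall f : 'I_n.+1 -> regionR d, (forall i, F (f i)) -> ~ injective f.

Definition card_eq (d : nat) (F : setfam d) (n : nat) : Prop :=
  exists f : 'I_n -> regionR d,
    injective f /\ (forall i, F (f i)) /\ (forall X, F X -> exists i, X = f i).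

Definition has_clique (d : nat) (P : setfam d) (n : nat) : Prop :=
  exists f : 'I_n -> regionR d,
    injective f /\ (forall i, P (f i)) /\
    (forall i j, i <> j -> adjacent (f i) (f j)).

From Pilot Require Import Defs.
From Stdlib Require Import Reals Lra.
From mathcomp Require Import all_boot all_algebra.
From mathcomp Require Import boolp classical_sets reals topology normedtype.
From mathcomp Require Import Rstruct Rstruct_topology.

Set Implicit Arguments. Unset Strict Implicit. Unset Printing Implicit Defensive.

(* Label each vertex of a fine grid on the cube [0, D]^d by the member X of the
   partition containing it: 0 if X meets every coordinate hyperplane y_i = 0, and
   1 + i for the first such hyperplane X misses.  As members have diameter < D, a
   member containing a point with y_i = 0 meets that hyperplane and one containing
   a point with y_i = D misses it: this is a Sperner labelling of the cube, so some
   grid cell carries all d + 1 labels (by a parity argument on a recursively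
   defined degree of faces, as for simplicial Sperner).  Hence for every e > 0 some
   N_e(p) has d + 1 distinct members, and by compactness of the cube some x has this
   property for all e > 0.  Since N_eps(x) has at most d + 1 members, the families
   found for small e all coincide with N_eps(x), so x lies in the closure of each
   of its d + 1 members. *)

Local Open Scope nat_scope.

Lemma big_addb_has (T : eqType) (s : seq T) (F : T -> bool) :
  \big[addb/false]_(i <- s) F i -> has F s.
Proof. by apply: contraTT => /hasPn h; rewrite big1_seq // => i /h/negbTE. Qed.

Lemma big_addb_pairs (T : eqType) (s : seq T) (F : T -> T -> bool) : uniq s ->
  (forall i j, F i j = F j i) ->
  \big[addb/false]_(i <- s) \big[addb/false]_(j <- rem i s) F i j = false.
Proof.
move=> + FC; elim: s => [|a s IH] /=; first by rewrite big_nil.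
case/andP=> as_ us; rewrite big_cons eqxx.
rewrite [X in _ (+) X](eq_big_seq (fun i => F i a (+) \big[addb/false]_(j <- rem i s) F i j)).
  by rewrite big_split /= IH // addbF (eq_bigr _ (fun j _ => FC a j)) addbb.
by move=> i is_ /=; rewrite eq_sym (negbTE (memPn as_ i is_)) big_cons.
Qed.

Lemma remC (T : eqType) (s : seq T) i j : uniq s -> rem j (rem i s) = rem i (rem j s).
Proof.
move=> us; rewrite (rem_filter i us) (rem_filter j us) !rem_filter ?filter_uniq //.
by rewrite -!filter_predI; apply: eq_filter => x /=; rewrite andbC.
Qed.

Lemma rem_iota_last j : rem j (iota 0 j.+1) = iota 0 j.
Proof.
rewrite rem_filter ?iota_uniq // -addn1 iotaD filter_cat /= eqxx cats0.
by apply/all_filterP/allP => m; rewrite mem_iota add0n => /andP[_ mj] /=; rewrite ltn_eqF.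
Qed.

Lemma big_addb_telescope (g : nat -> bool) n :
  \big[addb/false]_(0 <= x < n) (g x (+) g x.+1) = g 0 (+) g n.
Proof.
elim: n => [|n IH]; first by rewrite big_geq // addbb.
by rewrite big_nat_recr //= IH -addbA [g n (+) _]addbA addbb.
Qed.

(** * Cubical Sperner lemma *)

Definition upd (v : nat -> nat) (i x : nat) : nat -> nat :=
  fun m => if m == i then x else v m.

Definition incr (v : nat -> nat) (i : nat) : nat -> nat := upd v i (v i).+1.

Lemma upd_eq v i x : upd v i x i = x.
Proof. by rewrite /upd eqxx. Qed.

Lemma upd_neq v i x m : m != i -> upd v i x m = v m.
Proof. by rewrite /upd => /negbTE ->. Qed.

Lemma upd_upd v i x y : upd (upd v i x) i y = upd v i y.
Proof. by apply: funext => m; rewrite /upd; case: eqP. Qed.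

Lemma updC v i j x y : i != j -> upd (upd v i x) j y = upd (upd v j y) i x.
Proof.
move=> ij; apply: funext => m; rewrite /upd.
by case: (eqVneq m i) => [->|//]; rewrite (negbTE ij).
Qed.

Lemma upd_id v i x : v i = x -> upd v i x = v.
Proof. by move=> <-; apply: funext => m; rewrite /upd; case: eqP => // ->. Qed.

Lemma incr_upd v i x : incr (upd v i x) i = upd v i x.+1.
Proof. by rewrite /incr upd_eq upd_upd. Qed.

Lemma incr_updC v i j x : i != j -> incr (upd v j x) i = upd (incr v i) j x.
Proof. by move=> ij; rewrite /incr (upd_neq _ _ ij) updC // eq_sym. Qed.

Lemma incrC v i j : incr (incr v i) j = incr (incr v j) i.
Proof. by apply: funext => m; rewrite /incr /upd; do ! (case: eqP => //= ?; subst). Qed.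

Definition in_face (v : nat -> nat) (S : seq nat) (x : nat -> nat) : Prop :=
  (forall m, m \notin S -> x m = v m) /\ (forall m, v m <= x m <= (v m).+1).

Lemma in_face_base v S : in_face v S v.
Proof. by split=> // m; rewrite leqnn leqnSn. Qed.

Lemma in_face_consl v a S x : in_face v S x -> in_face v (a :: S) x.
Proof. by case=> hS hx; split=> // m; rewrite inE negb_or => /andP[_ /hS]. Qed.

Lemma in_face_consr v a S x : a \notin S -> in_face (incr v a) S x -> in_face v (a :: S) x.
Proof.
move=> aS [hS hx]; split=> m.
  by rewrite inE negb_or => /andP[ma mS]; rewrite hS // /incr upd_neq.
have [->|ma] := eqVneq m a; last by have := hx m; rewrite /incr upd_neq.
by rewrite hS // /incr upd_eq leqnSn leqnn.
Qed.

Fixpoint grid (n k : nat) : seq (nat -> nat) :=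
  if k is k'.+1 then [seq upd v k' x | x <- index_iota 0 n, v <- grid n k']
  else [:: fun _ => 0].

Definition in_grid n k (v : nat -> nat) : Prop :=
  (forall m, m < k -> v m < n) /\ (forall m, k <= m -> v m = 0).

Lemma in_grid_upd n k v x : in_grid n k v -> x < n -> in_grid n k.+1 (upd v k x).
Proof.
case=> h1 h2 xn; split=> m hm.
  have [->|mk] := eqVneq m k; first by rewrite upd_eq.
  by rewrite upd_neq // h1 // ltn_neqAle mk -ltnS.
by rewrite upd_neq ?h2 ?(ltnW hm) // neq_ltn hm orbT.
Qed.

Lemma eq_big_grid n k (F G : (nat -> nat) -> bool) :
  (forall v, in_grid n k v -> F v = G v) ->
  \big[addb/false]_(v <- grid n k) F v = \big[addb/false]_(v <- grid n k) G v.
Proof.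
elim: k F G => [|k IH] F G h /=; first by rewrite !big_seq1 h.
rewrite !big_allpairs_dep; apply: eq_big_seq => x; rewrite mem_index_iota => /andP[_ xn].
by apply: IH => v hv; apply/h/in_grid_upd.
Qed.

Lemma big_grid_has n k (F : (nat -> nat) -> bool) :
  \big[addb/false]_(v <- grid n k) F v -> exists2 v, in_grid n k v & F v.
Proof.
elim: k F => [|k IH] F /=; first by rewrite big_seq1 => h; exists (fun _ => 0).
rewrite big_allpairs_dep => /big_addb_has/hasP[x]; rewrite mem_index_iota => /andP[_ xn].
by case/IH=> v hv Fv; exists (upd v k x); first exact: in_grid_upd.
Qed.

Lemma big_grid_bottom n k (F : (nat -> nat) -> bool) : 0 < n ->
  \big[addb/false]_(v <- grid n k.+1) ((v k == 0) && F v) =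
  \big[addb/false]_(v <- grid n k) F v.
Proof.
move=> n_gt0; rewrite /= big_allpairs_dep big_ltn //.
have -> : \big[addb/false]_(1 <= x < n) \big[addb/false]_(v <- grid n k)
    ((upd v k x k == 0) && F (upd v k x)) = false.
  apply: big1_seq => x; rewrite mem_index_iota => /andP[_ /andP[x_gt0 _]].
  by apply: big1 => v _; rewrite upd_eq eqn0Ngt x_gt0.
by rewrite Monoid.mulm1; apply: eq_big_grid => v [_ hv]; rewrite upd_eq eqxx upd_id ?hv.
Qed.

Lemma big_grid_incr n k i (h : (nat -> nat) -> bool) : 0 < n -> i < k ->
  \big[addb/false]_(v <- grid n k) (h v (+) h (incr v i)) =
  \big[addb/false]_(v <- grid n k) ((v i == 0) && (h v (+) h (upd v i n))).
Proof.
move=> n_gt0; elim: k h => [|k IH] h //= ik; rewrite !big_allpairs_dep.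
have [->|ik'] := eqVneq i k.
  under eq_bigr => x _ do under eq_bigr => v _ do rewrite incr_upd.
  under [in RHS]eq_bigr => x _ do under eq_bigr => v _ do rewrite upd_eq upd_upd.
  rewrite exchange_big [RHS]exchange_big; apply: eq_bigr => v _ /=.
  rewrite (big_addb_telescope (fun x => h (upd v k x))) big_ltn // big1_seq ?addbF //.
  by move=> x; rewrite mem_index_iota => /andP[_ /andP[]]; case: x.
have {}ik : i < k by rewrite ltn_neqAle ik' -ltnS.
apply: eq_bigr => x _; under eq_bigr => v _ do rewrite incr_updC //.
rewrite (IH (fun v => h (upd v k x))) //.
by apply: eq_bigr => v _; rewrite upd_neq // [in RHS]updC // eq_sym.
Qed.

Section CubicalSperner.
Variable lab : (nat -> nat) -> nat.

Fixpoint face_below (c : nat) (v : nat -> nat) (S : seq nat) : bool :=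
  if S is i :: S' then face_below c v S' && face_below c (incr v i) S' else lab v < c.

Fixpoint face_has (c : nat) (v : nat -> nat) (S : seq nat) : bool :=
  if S is i :: S' then face_has c v S' || face_has c (incr v i) S' else lab v == c.

Lemma face_has_vertex c S v : uniq S -> face_has c v S ->
  exists2 x, in_face v S x & lab x = c.
Proof.
elim: S v => [|a S IH] v /=; first by move=> _ /eqP <-; exists v; first exact: in_face_base.
case/andP=> aS uS /orP[/(IH _ uS)|/(IH _ uS)] [x hx <-]; exists x => //.
  exact: in_face_consl.
exact: in_face_consr.
Qed.

Lemma face_below_all c S v : uniq S -> (forall x, in_face v S x -> lab x < c) ->
  face_below c v S.
Proof.
elim: S v => [|a S IH] v /=; first by move=> _; apply; exact: in_face_base.
case/andP=> aS uS h; rewrite !IH // => x hx.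
  exact/h/in_face_consr.
exact/h/in_face_consl.
Qed.

Lemma face_below_facet c S v i : i \in S -> face_below c v S ->
  face_below c v (rem i S) && face_below c (incr v i) (rem i S).
Proof.
elim: S v => [|a S IH] v //=; have [<- _ /andP[-> ->] //|ai] := eqVneq a i.
rewrite inE eq_sym (negbTE ai) /= => iS /andP[/(IH _ iS)/andP[-> ->]].
by move/(IH _ iS)/andP=> [-> ]; rewrite incrC.
Qed.

Lemma face_has_facet c S v i : i \in S ->
  face_has c v (rem i S) || face_has c (incr v i) (rem i S) -> face_has c v S.
Proof.
elim: S v => [|a S IH] v //=; have [<- //|ai] := eqVneq a i.
rewrite inE eq_sym (negbTE ai) /= => iS.
case/orP=> /orP[] h.
- by rewrite (IH _ iS) ?h.
- by rewrite (IH (incr v a) iS) ?h ?orbT.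
- by rewrite (IH _ iS) ?h ?orbT.
- by rewrite (IH (incr v a) iS) ?orbT // incrC h orbT.
Qed.

Lemma face_has_below c v S : ~~ face_below c v S -> face_below c.+1 v S -> face_has c v S.
Proof.
elim: S v => [|a S IH] v /=; first by rewrite -leqNgt ltnS eqn_leq => -> ->.
rewrite negb_and => /orP[h|h] /andP[h1 h2]; first by rewrite IH.
by rewrite (IH (incr v a)) ?orbT.
Qed.

Fixpoint sdeg (k : nat) (v : nat -> nat) (S : seq nat) : bool :=
  if k is k'.+1 then
    \big[addb/false]_(i <- S)
      ((face_below k v (rem i S) && sdeg k' v (rem i S)) (+)
       (face_below k (incr v i) (rem i S) && sdeg k' (incr v i) (rem i S)))
  else true.

Definition odd_face k v S := face_below k.+1 v S && sdeg k v S.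

Lemma sdegS k v S : sdeg k.+1 v S =
  \big[addb/false]_(i <- S) (odd_face k v (rem i S) (+) odd_face k (incr v i) (rem i S)).
Proof. by []. Qed.

Lemma sdeg_below k v S : uniq S -> face_below k.+1 v S -> sdeg k.+1 v S = false.
Proof.
(* Expanding twice, each codimension-2 face is counted from both facets containing it. *)
move=> uS hS; rewrite sdegS.
rewrite (eq_big_seq (fun i => sdeg k v (rem i S) (+) sdeg k (incr v i) (rem i S))); last first.
  by move=> i iS; have /andP[h1 h2] := face_below_facet iS hS; rewrite /odd_face h1 h2.
case: k {hS} => [|k]; first exact: big1_seq.
pose F i j := odd_face k v (rem j (rem i S)) (+) odd_face k (incr v j) (rem j (rem i S)) (+)
  (odd_face k (incr v i) (rem j (rem i S)) (+) odd_face k (incr (incr v i) j) (rem j (rem i S))).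
rewrite (eq_bigr (fun i => \big[addb/false]_(j <- rem i S) F i j)); last first.
  by move=> i _; rewrite !sdegS -big_split.
apply: big_addb_pairs => // i j; rewrite /F remC // incrC.
by rewrite -!addbA; congr addb; rewrite !addbA; congr addb; rewrite addbC.
Qed.

Lemma odd_face_has k v S : uniq S -> size S = k -> odd_face k v S ->
  forall c, c <= k -> face_has c v S.
Proof.
elim: k v S => [|k IH] v S uS sS.
  case: S uS sS => // _ _ /andP[] /=; rewrite ltnS leqn0 => hv _ c.
  by rewrite leqn0 => /eqP ->.
case/andP=> hb hd c; rewrite leq_eqVlt => /orP[/eqP ->|].
  apply: face_has_below hb; apply: contraTN hd => hb'.
  by rewrite sdeg_below.
rewrite ltnS => ck; move: hd; rewrite sdegS => /big_addb_has/hasP[i iS hi].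
have uR := rem_uniq i uS; have sR : size (rem i S) = k by rewrite size_rem // sS.
apply: (face_has_facet iS).
case: (odd_face k v (rem i S)) /idP hi => [h _|_ /= h].
  by rewrite (IH _ _ uR sR h).
by rewrite (IH _ _ uR sR h) ?orbT.
Qed.

Section SpernerLabelling.
Variables n d : nat.
Hypothesis n_gt0 : 0 < n.
Hypothesis lab_le : forall x, lab x <= d.
Hypothesis lab_bottom : forall x i, i < d -> x i = 0 -> lab x != i.+1.
Hypothesis lab_top : forall x i, i < d -> x i = n -> lab x != 0.

Lemma boundary_facet_not_odd j i w : j < d -> i <= j -> w i = n \/ w i = 0 /\ i < j ->
  odd_face j w (rem i (iota 0 j.+1)) = false.
Proof.
move=> jd ij hw; apply/negP => hodd.
have iI : i \in iota 0 j.+1 by rewrite mem_iota.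
have uR : uniq (rem i (iota 0 j.+1)) by rewrite rem_uniq // iota_uniq.
have sR : size (rem i (iota 0 j.+1)) = j by rewrite size_rem // size_iota.
have iR : i \notin rem i (iota 0 j.+1) by rewrite mem_rem_uniqF ?iota_uniq.
have i_lt_d : i < d := leq_ltn_trans ij jd.
case: hw => [hw|[hw hij]].
  have [x [hx _] hx0] := face_has_vertex uR (odd_face_has uR sR hodd (leq0n j)).
  by move: (lab_top i_lt_d (etrans (hx i iR) hw)); rewrite hx0.
have [x [hx _] hx1] := face_has_vertex uR (odd_face_has uR sR hodd hij).
by move: (lab_bottom i_lt_d (etrans (hx i iR) hw)); rewrite hx1 eqxx.
Qed.

Lemma bottom_face_below j v : j < d -> in_grid n j.+1 v -> v j = 0 ->
  face_below j.+1 v (iota 0 j).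
Proof.
move=> jd [_ hv] vj; apply: face_below_all; first exact: iota_uniq.
move=> x [hx _]; rewrite ltnNge; apply/negP => hlx.
have x0 m : j <= m -> x m = 0.
  move=> jm; rewrite hx ?mem_iota ?negb_and -?leqNgt ?jm ?orbT //.
  by move: jm; rewrite leq_eqVlt => /orP[/eqP <-|/hv].
have lx_gt0 : 0 < lab x by apply: leq_trans hlx.
have hi : (lab x).-1 < d by rewrite -ltnS prednK // ltnS.
have hxi : x (lab x).-1 = 0 by apply: x0; rewrite -ltnS prednK.
by have := lab_bottom hi hxi; rewrite prednK // eqxx.
Qed.

Lemma big_grid_odd_facet j i : j < d -> i <= j ->
  \big[addb/false]_(v <- grid n j.+1)
     (odd_face j v (rem i (iota 0 j.+1)) (+) odd_face j (incr v i) (rem i (iota 0 j.+1))) =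
  if i == j then \big[addb/false]_(v <- grid n j) sdeg j v (iota 0 j) else false.
Proof.
(* Along direction [i] interior facets cancel in pairs; of the two boundary facets
   only the bottom one in the last direction [j] can be odd. *)
move=> jd ij; rewrite big_grid_incr //.
rewrite (eq_big_grid (G := fun v => (v i == 0) && odd_face j v (rem i (iota 0 j.+1)))); last first.
  by move=> v _; rewrite (@boundary_facet_not_odd j i (upd v i n)) ?addbF ?upd_eq; last left.
have [->|ji] := eqVneq i j.
  rewrite -(@big_grid_bottom n j _ n_gt0); apply: eq_big_grid => v hv.
  case: eqP => [vj|//].
  by rewrite rem_iota_last /odd_face bottom_face_below.
rewrite big1_seq // => v _; case: eqP => [vi|//].
rewrite boundary_facet_not_odd //; right; split=> //.
by rewrite ltn_neqAle ji -ltnS.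
Qed.

Lemma big_grid_sdeg j : j <= d -> \big[addb/false]_(v <- grid n j) sdeg j v (iota 0 j).
Proof.
elim: j => [|j IH] jd; first by rewrite big_seq1.
under eq_bigr => v _ do rewrite sdegS.
rewrite exchange_big (eq_big_seq (fun i => if i == j then
  \big[addb/false]_(v <- grid n j) sdeg j v (iota 0 j) else false)); last first.
  by move=> i; rewrite mem_iota => /andP[_ ij]; exact: big_grid_odd_facet.
by rewrite -big_mkcond -[iota 0 j.+1]/(index_iota 0 j.+1) big_nat1_eq ltnSn IH // ltnW.
Qed.

Theorem cubical_sperner : exists2 v, in_grid n d v &
  forall c, c <= d -> exists2 x, in_face v (iota 0 d) x & lab x = c.
Proof.
have [v vg hv] := big_grid_has (big_grid_sdeg (leqnn d)).
have hodd : odd_face d v (iota 0 d).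
  rewrite /odd_face hv andbT; apply: face_below_all => [|x _]; first exact: iota_uniq.
  by rewrite ltnS lab_le.
exists v => // c cd; apply: face_has_vertex; first exact: iota_uniq.
by apply: odd_face_has hodd c cd; rewrite ?iota_uniq ?size_iota.
Qed.

End SpernerLabelling.
End CubicalSperner.

(** * Partitions of R^d into small sets *)

Local Open Scope R_scope.

Section MaxDistance.
Variable d : nat.
Implicit Types x y z : pointR d.

Lemma dist_le_dmax x y o : Rabs (x o - y o) <= dmax x y.
Proof.
rewrite /dmax; elim: (index_enum _) (mem_index_enum o) => [|a r IH] //.
rewrite inE big_cons => /orP[/eqP <-|/IH h]; first exact: Rmax_l.
exact: Rle_trans h (Rmax_r _ _).
Qed.

Lemma dmax_le x y e : 0 <= e -> (forall o, Rabs (x o - y o) <= e) -> dmax x y <= e.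
Proof. by move=> e_ge0 h; apply: (big_ind (fun r => r <= e)) => // *; apply: Rmax_lub. Qed.

Lemma dmax_lt x y e : 0 < e -> (forall o, Rabs (x o - y o) < e) -> dmax x y < e.
Proof. by move=> e_gt0 h; apply: (big_ind (fun r => r < e)) => // *; apply: Rmax_lub_lt. Qed.

Lemma dmax_ge0 x y : 0 <= dmax x y.
Proof.
apply: (big_ind (fun r => 0 <= r)) => [|a b ha _|o _]; [exact: Rle_refl| |exact: Rabs_pos].
exact: Rle_trans ha (Rmax_l _ _).
Qed.

Lemma dmaxxx x : dmax x x = 0.
Proof.
apply: Rle_antisym; last exact: dmax_ge0.
by apply: dmax_le => [|o]; rewrite ?Rminus_diag ?Rabs_R0; apply: Rle_refl.
Qed.

Lemma dmaxC x y : dmax x y = dmax y x.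
Proof. by apply: eq_bigr => o _; rewrite Rabs_minus_sym. Qed.

Lemma dmax_triangle x y z : dmax x z <= dmax x y + dmax y z.
Proof.
apply: dmax_le => [|o]; first by have := dmax_ge0 x y; have := dmax_ge0 y z; lra.
have := Rabs_triang (x o - y o) (y o - z o).
have := dist_le_dmax x y o; have := dist_le_dmax y z o.
by replace (x o - y o + (y o - z o)) with (x o - z o) by ring; lra.
Qed.

End MaxDistance.

Lemma cube_limit d (B : R) (Q : R -> pointR d -> Prop) :
  (forall e e' p q, Q e p -> e + dmax p q <= e' -> Q e' q) ->
  (forall e, 0 < e -> exists2 p, (forall o, 0 <= p o <= B) & Q e p) ->
  exists x, forall e, 0 < e -> Q e x.
Proof.
(* [x] is a cluster point of the filter generated by the witness sets of [Q e]. *)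
move=> Qwiden Qcube.
have Qmono e e' p : Q e p -> e <= e' -> Q e' p.
  by move=> hQ ee'; apply: Qwiden hQ _; rewrite dmaxxx Rplus_0_r.
pose S e := [set v : 'rV[R]_d | (forall o, `[0%R, B]%classic (v ord0 o)) /\ Q e (fun o => v ord0 o)]%classic.
pose F := filter_from [set e | 0 < e] S.
have F_filter : Filter F.
  apply: filter_from_filter => [|e1 e2 e1_gt0 e2_gt0]; first by exists 1; exact: Rlt_0_1.
  exists (Rmin e1 e2); first exact: Rmin_pos.
  by move=> v [hB hQ]; split; split=> //; apply: Qmono hQ _; [apply: Rmin_l|apply: Rmin_r].
have F_proper : ProperFilter F.
  apply: filter_from_proper => e /Qcube [p hp hQ].
  exists (\row_o p o)%R; split=> [o|].
    by rewrite mxE /= in_itv /=; have [/RleP -> /RleP ->] := hp o.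
  by have -> : (fun o => (\row_o p o)%R ord0 o) = p by apply: funext => o; rewrite mxE.
have cube_compact : compact [set v : 'rV[R]_d | forall o, `[0%R, B]%classic (v ord0 o)]%classic :=
  rV_compact (fun o => @segment_compact R 0 B).
have [|x [_ clx]] := cube_compact F F_proper.
  by exists 1; [exact: Rlt_0_1 | move=> v []].
exists (fun o => x ord0 o) => e e_gt0.
have e2_gt0 : 0 < e / 2 by lra.
have [v [[_ hQ] [_ xv]]] : (S (e / 2) `&` ball x (e / 2))%classic !=set0%classic.
  by apply: clx; [exists (e / 2) | apply: nbhsx_ballx; apply/RltP].
apply: Qwiden hQ _; have : dmax (fun o => v ord0 o) (fun o => x ord0 o) < e / 2.
  by apply: dmax_lt => // o; have /RltP := xv ord0 o; rewrite Rabs_minus_sym.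
lra.
Qed.

Section Neighbourhoods.
Variables (d : nat) (P : setfam d).

Definition has_distinct (F : setfam d) (n : nat) : Prop :=
  exists f : 'I_n -> regionR d, injective f /\ forall i, F (f i).

Lemma card_le_fill (F : setfam d) n (f : 'I_n -> regionR d) :
  card_le F n -> injective f -> (forall i, F (f i)) -> forall X, F X -> exists i, X = f i.
Proof.
move=> hle finj hf X hX; apply: contrapT => hXf.
pose g o := if unlift ord_max o is Some i then f i else X.
have gE i : g (lift ord_max i) = f i by rewrite /g liftK.
have gX : g ord_max = X by rewrite /g unlift_none.
apply: (hle g) => [o|o1 o2]; first by case: (unliftP ord_max o) => [i|] ->; rewrite ?gE ?gX.
case: (unliftP ord_max o1) => [i1|] ->; case: (unliftP ord_max o2) => [i2|] ->;
  rewrite ?gE ?gX // => e; first by rewrite (finj _ _ e).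
- by case: hXf; exists i1.
- by case: hXf; exists i2.
Qed.

Lemma card_eq_of_distinct (F : setfam d) n : card_le F n -> has_distinct F n -> card_eq F n.
Proof. by move=> hle [f [finj hf]]; exists f; split=> //; split=> //; apply: card_le_fill. Qed.

Lemma nbhd_widen e e' p q X : nbhd P e p X -> e + dmax p q <= e' -> nbhd P e' q X.
Proof.
move=> [PX [y [Xy yp]]] hle; split; first exact: PX.
exists y; split; first exact: Xy.
by rewrite /Defs.closed_ball in yp *; have := dmax_triangle y p q; lra.
Qed.

Lemma has_distinct_nbhd_widen n e e' p q : has_distinct (nbhd P e p) n ->
  e + dmax p q <= e' -> has_distinct (nbhd P e' q) n.
Proof. by move=> [f [finj hf]] hle; exists f; split=> // i; apply: nbhd_widen (hf i) hle. Qed.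

Lemma nbhd_sub_closure eps n x : 0 < eps -> card_le (nbhd P eps x) n ->
  (forall e, 0 < e -> has_distinct (nbhd P e x) n) ->
  forall X, nbhd P eps x X -> closureR X x.
Proof.
move=> eps_gt0 hle hx X hX e e_gt0.
have r_gt0 : 0 < Rmin e eps / 2 by have := Rmin_pos _ _ e_gt0 eps_gt0; lra.
have [g [ginj hg]] := hx _ r_gt0.
have hg_eps i : nbhd P eps x (g i).
  by apply: nbhd_widen (hg i) _; rewrite dmaxxx; have := Rmin_r e eps; lra.
have [i ->] := card_le_fill hle ginj hg_eps hX.
have [_ [y [gy yx]]] := hg i; exists y; split=> //.
by rewrite dmaxC; rewrite /Defs.closed_ball in yx; have := Rmin_l e eps; lra.
Qed.

End Neighbourhoods.

Section CornerLabel.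
Variable d : nat.

Definition meets_hyperplane (X : regionR d) (o : 'I_d) : Prop := exists2 y, X y & y o = 0.

Definition corner_label (X : regionR d) : nat :=
  if [seq o <- enum 'I_d | ~~ `[< meets_hyperplane X o >]] is o :: _ then o.+1 else 0.

Lemma corner_label_le X : (corner_label X <= d)%N.
Proof. by rewrite /corner_label; case: [seq _ <- _ | _] => [|o _] //; exact: ltn_ord. Qed.

Lemma corner_label_bottom X y o : X y -> y o = 0 -> corner_label X != o.+1.
Proof.
rewrite /corner_label => Xy yo; case E: [seq _ <- _ | _] => [|o' s] //.
apply/eqP => -[/val_inj oo']; have : o' \in [seq o <- enum 'I_d | ~~ `[< meets_hyperplane X o >]].
  by rewrite E mem_head.
by rewrite mem_filter oo' => /andP[/asboolPn []]; exists y.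
Qed.

Lemma corner_label_top D X y o : strict_pairwise_bound D X -> X y -> y o = D ->
  corner_label X != 0%N.
Proof.
rewrite /corner_label => hD Xy yo; case E: [seq _ <- _ | _] => [|//].
have : o \notin [seq o <- enum 'I_d | ~~ `[< meets_hyperplane X o >]] by rewrite E.
rewrite mem_filter mem_enum andbT negbK => /asboolP [z Xz zo].
have := hD _ _ Xy Xz; have := dist_le_dmax y z o; rewrite yo zo Rminus_0_r.
by have := Rle_abs D; lra.
Qed.

End CornerLabel.

Lemma grid_vertex_near_center d S (v x : nat -> nat) (h : R) : 0 <= h -> in_face v S x ->
  dmax (fun o : 'I_d => INR (x o) * h) (fun o => (INR (v o) + / 2) * h) <= h / 2.
Proof.
move=> h_ge0 [_ hx]; apply: dmax_le => [|o]; first lra.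
have /andP[lo hi] := hx o.
have lo' : INR (v o) <= INR (x o) by apply/le_INR/leP.
have hi' : INR (x o) <= INR (v o) + 1 by rewrite -S_INR; apply/le_INR/leP.
by apply: Rabs_le; split; nra.
Qed.

Lemma cube_nbhd_distinct d (P : setfam d) (D : R) : 0 < D ->
  (forall x, exists X, P X /\ X x) -> (forall X, P X -> strict_pairwise_bound D X) ->
  forall e, 0 < e -> exists2 p, (forall o, 0 <= p o <= D) & has_distinct (nbhd P e p) d.+1.
Proof.
move=> D_gt0 cover bounded e e_gt0.
have [mem memP] := choice cover.
have [n [n_big n_gt0]] := archimed_cor1 (e / D) (Rdiv_lt_0_compat _ _ e_gt0 D_gt0).
have INRn_gt0 : 0 < INR n := lt_0_INR _ n_gt0.
pose h := D / INR n.
have h_gt0 : 0 < h by apply: Rdiv_lt_0_compat.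
have nh : INR n * h = D by rewrite /h; field; lra.
have h_le : h <= e.
  have : D * / INR n < D * (e / D) by apply: Rmult_lt_compat_l.
  by rewrite /h /Rdiv (_ : D * (e * / D) = e); [lra|field; lra].
pose pt (x : nat -> nat) : pointR d := fun o => INR (x o) * h.
pose lab x := corner_label (mem (pt x)).
have [||x i i_lt_d xi|x i i_lt_d xi|v vg hv] := @cubical_sperner lab n d _ _ _ _.
- exact/ltP.
- by move=> x; apply: corner_label_le.
- apply: (corner_label_bottom (o := Ordinal i_lt_d) (memP _).2).
  by rewrite /pt /= xi Rmult_0_l.
- apply: (corner_label_top (o := Ordinal i_lt_d) (bounded _ (memP _).1) (memP _).2).
  by rewrite /pt /= xi.
have hv' (c : 'I_d.+1) : exists x, in_face v (iota 0 d) x /\ lab x = c.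
  by have [x ? ?] := hv c (ltn_ord c); exists x.
have [xc hxc] := choice hv'.
exists (fun o => (INR (v o) + / 2) * h) => [o|].
  have : (INR (v o) + 1 <= INR n).
    by rewrite -S_INR; apply: le_INR; apply/leP; apply: vg.1.
  by have := pos_INR (v o); rewrite -nh; split; nra.
exists (fun c => mem (pt (xc c))); split=> [c1 c2 same|c].
  by apply: ord_inj; rewrite -(hxc c1).2 -(hxc c2).2 /lab same.
split; first exact: (memP _).1.
exists (pt (xc c)); split; first exact: (memP _).2.
apply: Rle_trans (grid_vertex_near_center d (Rlt_le _ _ h_gt0) (hxc c).1) _; lra.
Qed.

Theorem mainTheorem15 (d : nat) (P : setfam d) :
  is_partition P ->
  (exists D : R, 0 < D /\ forall X, P X -> strict_pairwise_bound D X) ->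
  forall eps : R, 0 < eps ->
  (forall q : pointR d, card_le (nbhd P eps q) d.+1) ->
  (exists p : pointR d, card_eq (nbhd P eps p) d.+1) /\ has_clique P d.+1.
Proof.
move=> [_ [_ cover]] [D [D_gt0 bounded]] eps eps_gt0 hle.
have sperner := cube_nbhd_distinct D_gt0 cover bounded.
split.
  have [p _ hp] := sperner eps eps_gt0.
  by exists p; apply: card_eq_of_distinct.
have [x hx] := cube_limit (@has_distinct_nbhd_widen d P d.+1) sperner.
have [f [finj hf]] := hx eps eps_gt0.
exists f; split=> //; split=> [i|i j _]; first by case: (hf i).
by exists x; split; apply: (nbhd_sub_closure eps_gt0 (hle x) hx); apply: hf.
Qed.
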